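(* Let $G$ be a finite simple connected graph and let $k,l$ be integers with $2\le k\le l\le |V(G)|$. Then $\kappa_k^*(G)\geq \kappa_l^*(G)$.
   Context: For $S\subseteq V(G)$ with $|S|\ge 2$, an $S$-Steiner tree of $G$ is a subtree $T$ of $G$ with $S\subseteq V(T)$ all of whose leaves belong to $S$. A family of $S$-Steiner trees $T_1,\dots,T_k$ is completely independent if for all $1\le p<q\le k$: $E(T_p)\cap E(T_q)=\emptyset$, $V(T_p)\cap V(T_q)=S$, and for any two vertices $x_1,x_2\in S$ the $(x_1,x_2)$-paths in $T_p$ and in $T_q$ are internally disjoint. $\kappa^*_G(S)$ is the maximum number of trees in a completely independent family of $S$-Steiner trees in $G$, and the generalized $k^*$-connectivity is $\kappa_k^*(G)=\min\{\kappa^*_G(S): S\subseteq V(G),\ |S|=k\}$. *)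

From mathcomp Require Import all_boot all_order.
From mathcomp Require Import boolp.

Set Implicit Arguments.
Unset Strict Implicit.
Unset Printing Implicit Defensive.

Section Steiner.
Variable T : finType.
Variable G : rel T.

(* A subgraph H = (vertex set, edge set); edges are 2-element sets {x,y}. *)
Definition subgraph := ({set T} * {set {set T}})%type.

Definition sg_adj (H : subgraph) : rel T := fun x y => [set x; y] \in H.2.

Definition is_subgraph (H : subgraph) : Prop :=
  forall E, E \in H.2 -> exists x y, [/\ E = [set x; y], x \in H.1, y \in H.1 & G x y].

(* a path in H from x to y: the vertex sequence x :: p, no repeated vertices *)
Definition is_path (H : subgraph) (x y : T) (p : seq T) : Prop :=
  [/\ x \in H.1, path (sg_adj H) x p, last x p = y & uniq (x :: p)].

Definition internal (x y : T) (p : seq T) : {set T} :=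
  [set v | (v \in x :: p) && (v != x) && (v != y)].

Definition sg_connected (H : subgraph) : Prop :=
  forall x y, x \in H.1 -> y \in H.1 -> exists p, is_path H x y p.

Definition acyclic (H : subgraph) : Prop :=
  forall c : seq T, 3 <= size c -> uniq c -> ~ cycle (sg_adj H) c.

Definition is_tree (H : subgraph) : Prop :=
  [/\ is_subgraph H, H.1 != set0, sg_connected H & acyclic H].

Definition sg_deg (H : subgraph) (x : T) : nat := #|[set y | sg_adj H x y]|.

Definition is_leaf (H : subgraph) (x : T) : Prop := x \in H.1 /\ sg_deg H x = 1.

Definition steiner_tree (S : {set T}) (H : subgraph) : Prop :=
  [/\ is_tree H, S \subset H.1 & forall x, is_leaf H x -> x \in S].

Definition compl_indep (S : {set T}) (m : nat) (F : 'I_m -> subgraph) : Prop :=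
  (forall i, steiner_tree S (F i)) /\
  forall i j : 'I_m, i < j ->
    [/\ (F i).2 :&: (F j).2 = set0,
        (F i).1 :&: (F j).1 = S &
        forall x1 x2 p q, x1 \in S -> x2 \in S ->
          is_path (F i) x1 x2 p -> is_path (F j) x1 x2 q ->
          [disjoint internal x1 x2 p & internal x1 x2 q]].

(* Such trees are pairwise edge-disjoint and each has
   at least one edge of G, so m <= #|T| * #|T|; the range bound is harmless. *)
Definition kappaS (S : {set T}) : nat :=
  \max_(m < (#|T| * #|T|).+1 | `[< exists F : 'I_m -> subgraph, compl_indep S F >]) m.

Definition kappa_star (k : nat) : nat :=
  \big[minn/(#|T| * #|T|)]_(S : {set T} | #|S| == k) kappaS S.

End Steiner.

From mathcomp Require Import all_boot all_order.
From mathcomp Require Import boolp.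

(* If S is contained in S', pruning every tree of a completely independent
   family of S'-Steiner trees down to the union of its paths between vertices
   of S yields a completely independent family of S-Steiner trees.  Edge
   disjointness and internal disjointness of paths are inherited; the delicate
   point is that two pruned trees meet only in S.  A common vertex x outside S
   would separate two vertices of S in each of the two trees; since in a tree a
   cut vertex x separates any third vertex from one of two vertices it
   separates, one finds a single pair of vertices of S separated by x in both
   trees, contradicting the internal disjointness of their connecting paths.
   Hence kappa*(S') <= kappa*(S), and every k-set extends to an l-set. *)

Set Implicit Arguments.
Unset Strict Implicit.
Unset Printing Implicit Defensive.

Import Order.TTheory.

Section SymmetricPaths.
Variables (T : eqType) (e : rel T).
Hypothesis e_sym : symmetric e.

Lemma sym_rev_path x p : path e x p -> path e (last x p) (rev (belast x p)).
Proof. by move=> e_p; rewrite rev_path; apply: sub_path e_p => a b; rewrite e_sym. Qed.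

Lemma path_inner_neighbours a p v : path e a p -> uniq (a :: p) -> v \in p ->
    v != last a p ->
  exists w y, [/\ w != y, e v w, e v y, w \in a :: p & y \in a :: p].
Proof.
move=> + + vp; case/splitPr: vp => p1 [|y p2] e_p uniq_p vlast.
  by rewrite last_cat eqxx in vlast.
move: e_p; rewrite cat_path => /andP[_ /= /and3P[e_wv e_vy _]].
exists (last a p1), y; split => //.
- move: uniq_p; rewrite -cat_cons cat_uniq => /and3P[_ /hasPn no_common _].
  have yp2 : y \in v :: y :: p2 by rewrite !inE eqxx orbT.
  by apply: contraTneq (no_common y yp2) => <-; rewrite mem_last.
- by rewrite e_sym.
- by rewrite -cat_cons mem_cat mem_last.
- by rewrite -cat_cons mem_cat !inE eqxx !orbT.
Qed.

Hypothesis e_acyclic : forall c : seq T, 3 <= size c -> uniq c -> ~ cycle e c.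

(* Two distinct first steps towards the same endpoint close a cycle through x. *)
Lemma acyclic_path_head x y z p q : path e x (y :: p) -> path e x (z :: q) ->
  uniq (x :: y :: p) -> uniq (x :: z :: q) -> last y p = last z q -> y = z.
Proof.
move=> e_p e_q uniq_p uniq_q same_last; apply/eqP/negPn/negP => yz.
have meet : has (mem (z :: q)) (y :: p).
  by apply/hasP; exists (last y p); [exact: mem_last | rewrite inE same_last mem_last].
move: meet e_p uniq_p; move Pdef: (y :: p) => P meet.
move: Pdef; case: (split_find meet) => w P1 P2 wQ P1Q Pdef e_P uniq_P.
move: wQ e_q uniq_q P1Q; move Qdef: (z :: q) => Q wQ.
move: Qdef; case/splitPr: wQ => Q1 Q2 Qdef e_Q uniq_Q P1Q.
move: uniq_P; rewrite /= mem_cat negb_or => /andP[/andP[xP1 _]].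
rewrite cat_uniq => /and3P[uniq_P1 _ _].
move: uniq_Q; rewrite /= mem_cat negb_or => /andP[/andP[xQ1 _]].
rewrite cat_uniq => /and3P[uniq_Q1 /hasPn wQ1 _].
have {}wQ1 : w \notin Q1 := wQ1 w (mem_head _ _).
apply: (e_acyclic (c := x :: rcons P1 w ++ rev Q1)).
- rewrite /= size_cat size_rcons size_rev.
  case: P1 Pdef {P1Q xP1 uniq_P1 e_P} => [|a P1] //= [yw _].
  case: Q1 Qdef {xQ1 uniq_Q1 wQ1 e_Q} => [|b Q1] //= [zw _].
  by rewrite yw zw eqxx in yz.
- rewrite /= cat_uniq rev_uniq uniq_P1 uniq_Q1 mem_cat mem_rev negb_or xP1 xQ1 /= andbT.
  apply/hasPn => v; rewrite mem_rev => vQ1; rewrite mem_rcons inE negb_or.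
  apply/andP; split; first by apply: contraNneq wQ1 => <-.
  by apply: contra P1Q => vP1; apply/hasP; exists v; rewrite // inE mem_cat vQ1.
- rewrite /= rcons_cat cat_path; apply/andP; split.
    by move: e_P; rewrite cat_path => /andP[].
  rewrite last_rcons -rev_cons.
  move: e_Q; rewrite -cat_rcons cat_path => /andP[/sym_rev_path + _].
  by rewrite last_rcons belast_rcons.
Qed.

Lemma acyclic_path_unique x p q : path e x p -> path e x q ->
  uniq (x :: p) -> uniq (x :: q) -> last x p = last x q -> p = q.
Proof.
elim: p x q => [|y p IH] x [|z q] //= e_p e_q uniq_p uniq_q same_last.
- by move: uniq_q; rewrite same_last mem_last.
- by move: uniq_p; rewrite -same_last mem_last.
have yz := acyclic_path_head e_p e_q uniq_p uniq_q same_last; subst z.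
case/andP: e_p => _ e_p; case/andP: e_q => _ e_q.
case/andP: uniq_p => _ uniq_p; case/andP: uniq_q => _ uniq_q.
by rewrite (IH y q).
Qed.

End SymmetricPaths.

Section Subgraphs.
Variables (T : finType) (G : rel T).
Implicit Types (H : subgraph T) (x u w : T).

Lemma sg_adj_sym H : symmetric (sg_adj H).
Proof. by move=> x y; rewrite /sg_adj setUC. Qed.

Lemma sg_adj_mem H x y : is_subgraph G H -> sg_adj H x y -> x \in H.1 /\ y \in H.1.
Proof.
move=> subH /subH [a [b [Exy aH bH _]]].
have [xab yab] : x \in [set a; b] /\ y \in [set a; b] by rewrite -Exy !inE !eqxx orbT.
by split; [case/set2P: xab => ->|case/set2P: yab => ->].
Qed.

Lemma is_path_sub H u w p : is_subgraph G H -> is_path H u w p -> {subset u :: p <= H.1}.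
Proof.
move=> subH [uH e_p _ _]; elim: p u uH e_p => [|v p IH] u uH /=.
  by move=> _ t; rewrite inE => /eqP->.
case/andP=> /(sg_adj_mem subH)[_ vH] e_p t; rewrite inE => /orP[/eqP-> //|].
exact: IH.
Qed.

Lemma connect_is_path H x y : x \in H.1 -> connect (sg_adj H) x y -> exists p, is_path H x y p.
Proof. by move=> xH /connectP[p e_p ->]; case: (shortenP e_p) => p' ? ? _; exists p'. Qed.

Lemma is_path_rev H u w p : is_subgraph G H -> is_path H u w p ->
  exists2 q, is_path H w u q & w :: q =i u :: p.
Proof.
move=> subH pathH; have := is_path_sub subH pathH; case: pathH => uH e_p last_p uniq_p sub_p.
have Erev : w :: rev (belast u p) = rev (u :: p) by rewrite [u :: p]lastI rev_rcons last_p.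
exists (rev (belast u p)); last by move=> t; rewrite Erev mem_rev.
split.
- by apply: sub_p; rewrite -last_p mem_last.
- by rewrite -last_p; apply: sym_rev_path e_p; apply: sg_adj_sym.
- by rewrite -(last_cons w w) Erev rev_cons last_rcons.
- by rewrite Erev rev_uniq.
Qed.

Definition separates H x u w := exists2 p, is_path H u w p & x \in internal u w p.

Lemma mem_internal x u w p : (x \in internal u w p) = [&& x \in u :: p, x != u & x != w].
Proof. by rewrite inE andbA. Qed.

Lemma separates_sym H x u w : is_subgraph G H -> separates H x u w -> separates H x w u.
Proof.
move=> subH [p pathH xp]; have [q pathH' Eq] := is_path_rev subH pathH.
by exists q => //; move: xp; rewrite !mem_internal Eq => /and3P[-> -> ->].
Qed.

Section Trees.
Variable H : subgraph T.
Hypothesis treeH : is_tree G H.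

Lemma tree_separates_path x u w p : separates H x u w -> is_path H u w p ->
  x \in internal u w p.
Proof.
case: treeH => _ _ _ acycH [q [_ e_q last_q uniq_q] xq] [_ e_p last_p uniq_p].
by rewrite (acyclic_path_unique (@sg_adj_sym H) acycH e_p e_q) // last_p last_q.
Qed.

Lemma tree_avoiding_path x u w : u \in H.1 -> w \in H.1 -> x != u -> x != w ->
  ~ separates H x u w -> exists2 p, is_path H u w p & x \notin u :: p.
Proof.
case: treeH => _ _ connH _ uH wH xu xw not_sep; have [p pathH] := connH u w uH wH.
exists p => //; apply/negP => xp; apply: not_sep; exists p => //.
by rewrite mem_internal xp xu xw.
Qed.

(* Otherwise paths a -> c and c -> b avoiding x would give an a-b path avoiding x. *)
Lemma tree_separates_split x a b c : separates H x a b -> c \in H.1 -> c != x ->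
  separates H x c a \/ separates H x c b.
Proof.
move=> sep_ab cH cx; have [subH _ _ _] := treeH.
have [p_ab path_ab x_ab] := sep_ab; move: x_ab; rewrite mem_internal => /and3P[_ xa xb].
have [aH bH] : a \in H.1 /\ b \in H.1.
  have [aH _ last_ab _] := path_ab; split => //.
  by apply: (is_path_sub subH path_ab); rewrite -last_ab mem_last.
case: (pselect (separates H x c a)) => [|not_ca]; first by left.
case: (pselect (separates H x c b)) => [|not_cb]; first by right.
exfalso.
have not_ac : ~ separates H x a c by move/(separates_sym subH).
have xc : x != c by rewrite eq_sym.
have [p [_ e_p last_p _] xp] := tree_avoiding_path aH cH xa xc not_ac.
have [q [_ e_q last_q _] xq] := tree_avoiding_path cH bH xc xb not_cb.
have e_pq : path (sg_adj H) a (p ++ q) by rewrite cat_path e_p last_p.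
have : last a (p ++ q) = b by rewrite last_cat last_p last_q.
case: (shortenP e_pq) => r e_r uniq_r sub_r last_r.
have := tree_separates_path sep_ab (And4 aH e_r last_r uniq_r).
rewrite mem_internal inE => /and3P[/orP[/eqP xa'|/sub_r]]; first by rewrite xa' eqxx in xa.
rewrite mem_cat => /orP[xp'|xq']; first by rewrite inE xp' orbT in xp.
by rewrite inE xq' orbT in xq.
Qed.

End Trees.
End Subgraphs.

Section Prune.
Variables (T : finType) (G : rel T) (S : {set T}).
Implicit Types (H : subgraph T) (x : T).

Definition prune_vertices H : {set T} :=
  [set v | `[< exists a b p, [/\ a \in S, b \in S, is_path H a b p & v \in a :: p] >]].

(* The union of the paths of H between vertices of S; for a tree H containing S
   this is the smallest subtree of H containing S. *)
Definition prune H : subgraph T :=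
  (prune_vertices H, [set E in H.2 | E \subset prune_vertices H]).

Lemma prune_verticesP H v :
  reflect (exists a b p, [/\ a \in S, b \in S, is_path H a b p & v \in a :: p])
          (v \in prune_vertices H).
Proof. by rewrite inE; apply: asboolP. Qed.

Lemma sg_adj_prune H x y :
  sg_adj (prune H) x y = [&& sg_adj H x y, x \in prune_vertices H & y \in prune_vertices H].
Proof. by rewrite /sg_adj /= inE subUset !sub1set. Qed.

Lemma is_path_prune_vertices H a b p : a \in S -> b \in S -> is_path H a b p ->
  {subset a :: p <= prune_vertices H}.
Proof. by move=> aS bS path_ab v vp; apply/prune_verticesP; exists a, b, p. Qed.

Lemma sub_prune_vertices H : S \subset H.1 -> S \subset prune_vertices H.
Proof.
move=> SH; apply/subsetP => a aS; apply: (@is_path_prune_vertices H a a [::]) => //.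
  by split=> //; apply: (subsetP SH).
exact: mem_head.
Qed.

Lemma prune_vertices_sub H : is_subgraph G H -> prune_vertices H \subset H.1.
Proof.
move=> subH; apply/subsetP => v /prune_verticesP[a [b [p [_ _ path_ab vp]]]].
exact: is_path_sub subH path_ab _ vp.
Qed.

Lemma path_prune H a p : {subset a :: p <= prune_vertices H} ->
  path (sg_adj H) a p -> path (sg_adj (prune H)) a p.
Proof.
elim: p a => //= v p IH a sub_p /andP[e_av e_p].
rewrite sg_adj_prune e_av !sub_p ?inE ?eqxx ?orbT //=.
by apply: IH e_p => t t_vp; apply: sub_p; rewrite inE t_vp orbT.
Qed.

Lemma prune_is_path H u w p : is_subgraph G H -> is_path (prune H) u w p -> is_path H u w p.
Proof.
move=> subH [uH e_p last_p uniq_p]; split => //.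
- exact: (subsetP (prune_vertices_sub subH)).
- by apply: sub_path e_p => x y; rewrite sg_adj_prune => /andP[].
Qed.

Lemma prune_subgraph H : is_subgraph G H -> is_subgraph G (prune H).
Proof.
move=> subH E; rewrite inE => /andP[EH E_sub]; have [x [y [Exy _ _ Gxy]]] := subH E EH.
by exists x, y; split => //; apply: (subsetP E_sub); rewrite Exy !inE eqxx ?orbT.
Qed.

Lemma prune_acyclic H : acyclic H -> acyclic (prune H).
Proof.
move=> acycH c size_c uniq_c /(sub_cycle _) cyc; apply: (acycH c) => //; apply: cyc.
by move=> x y; rewrite sg_adj_prune => /andP[].
Qed.

Lemma S_connect_prune H a b p : a \in S -> b \in S -> is_path H a b p ->
  {subset a :: p <= connect (sg_adj (prune H)) a}.
Proof.
move=> aS bS path_ab; have [_ e_p _ _] := path_ab.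
by apply: path_connect; apply: path_prune e_p; apply: is_path_prune_vertices path_ab.
Qed.

Lemma prune_connected H : S \subset H.1 -> sg_connected H -> sg_connected (prune H).
Proof.
move=> SH connH u v uH.
have [a [b [p [aS bS path_ab up]]]] := prune_verticesP H u uH.
case/prune_verticesP => c [d [r [cS dS path_cd vr]]].
apply: connect_is_path => //.
have [q path_ac] := connH a c (subsetP SH a aS) (subsetP SH c cS).
have c_aq : c \in a :: q by have [_ _ <- _] := path_ac; apply: mem_last.
have sym := sym_connect_sym (@sg_adj_sym _ (prune H)).
apply: (connect_trans (y := a)); first by rewrite sym; apply: S_connect_prune path_ab _ up.
apply: (connect_trans (y := c)); first exact: S_connect_prune path_ac _ c_aq.
exact: S_connect_prune path_cd _ vr.
Qed.

(* A vertex outside S is an inner vertex of an S-path, whose two neighbours on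
   that path survive the pruning. *)
Lemma prune_leaf H x : is_leaf (prune H) x -> x \in S.
Proof.
case=> /prune_verticesP[a [b [p [aS bS path_ab xp]]]] deg1; apply/contraT => xS.
have [_ e_p last_p uniq_p] := path_ab.
have [xa xb] : x != a /\ x != b by split; apply: contraNneq xS => ->.
have {}xp : x \in p by move: xp; rewrite inE (negbTE xa).
have x_last : x != last a p by rewrite last_p.
have [w [y [wy e_xw e_xy wp yp]]] :=
  path_inner_neighbours (@sg_adj_sym _ H) e_p uniq_p xp x_last.
have sub_p := is_path_prune_vertices aS bS path_ab.
have x_pH : x \in prune_vertices H by apply: sub_p; rewrite inE xp orbT.
have : [set w; y] \subset [set z | sg_adj (prune H) x z].
  apply/subsetP => t /set2P[]->; rewrite inE sg_adj_prune x_pH sub_p //.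
    by rewrite e_xw.
  by rewrite e_xy.
by move/subset_leq_card; rewrite cards2 wy; move: deg1; rewrite /sg_deg => ->.
Qed.

Lemma prune_steiner_tree H : is_tree G H -> S \subset H.1 -> S != set0 ->
  steiner_tree G S (prune H).
Proof.
move=> [subH _ connH acycH] SH Sne; have SpH := sub_prune_vertices SH.
split; [split | exact: SpH | exact: prune_leaf].
- exact: prune_subgraph subH.
- by case/set0Pn: Sne => a aS; apply/set0Pn; exists a; apply: (subsetP SpH).
- exact: prune_connected SH connH.
- exact: prune_acyclic acycH.
Qed.

Lemma prune_vertex_separates H x : x \in prune_vertices H -> x \notin S ->
  exists a b, [/\ a \in S, b \in S & separates H x a b].
Proof.
case/prune_verticesP => a [b [p [aS bS path_ab xp]]] xS; exists a, b; split => //.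
have [xa xb] : x != a /\ x != b by split; apply: contraNneq xS => ->.
by exists p; rewrite // mem_internal xp xa xb.
Qed.

End Prune.

Section Independence.
Variables (T : finType) (G : rel T).
Implicit Types (S : {set T}) (H : subgraph T) (x : T).

Definition internally_disjoint S H1 H2 : Prop :=
  forall x1 x2 p q, x1 \in S -> x2 \in S -> is_path H1 x1 x2 p -> is_path H2 x1 x2 q ->
    [disjoint internal x1 x2 p & internal x1 x2 q].

Lemma internally_disjoint_sub S S' H1 H2 : S \subset S' ->
  internally_disjoint S' H1 H2 -> internally_disjoint S H1 H2.
Proof. by move=> /subsetP SS' disj x1 x2 p q /SS' x1S /SS' x2S; apply: disj. Qed.

Lemma internally_disjoint_separates S H1 H2 x u w : internally_disjoint S H1 H2 ->
  u \in S -> w \in S -> separates H1 x u w -> separates H2 x u w -> False.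
Proof.
move=> disj uS wS [p path_p xp] [q path_q xq].
by move: (disj u w p q uS wS path_p path_q) => /disjointFr/(_ xp); rewrite xq.
Qed.

(* Apply [tree_separates_split] to c and d in H1, then to the resulting vertex
   in H2. *)
Lemma separates_common_pair S H1 H2 x a b c d :
    is_tree G H1 -> is_tree G H2 -> S \subset H1.1 -> S \subset H2.1 -> x \notin S ->
    [/\ a \in S, b \in S, c \in S & d \in S] ->
    separates H1 x a b -> separates H2 x c d ->
  exists u w, [/\ u \in S, w \in S, separates H1 x u w & separates H2 x u w].
Proof.
move=> tree1 tree2 /subsetP SH1 /subsetP SH2 xS [aS bS cS dS] sep_ab sep_cd.
have [[sub1 _ _ _] [sub2 _ _ _]] := (tree1, tree2).
have neq_x v : v \in S -> v != x by move=> vS; apply: contraNneq xS => <-.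
have [e eS sep_ce] : exists2 e, e \in S & separates H1 x c e.
  by case: (tree_separates_split tree1 sep_ab (SH1 c cS) (neq_x c cS)) => ?;
    [exists a | exists b].
have [sep_dc|sep_de] := tree_separates_split tree1 sep_ce (SH1 d dS) (neq_x d dS).
  by exists c, d; split => //; apply: separates_sym sub1 sep_dc.
have [sep_ec|sep_ed] := tree_separates_split tree2 sep_cd (SH2 e eS) (neq_x e eS).
  by exists c, e; split => //; apply: separates_sym sub2 sep_ec.
by exists d, e; split => //; apply: separates_sym sub2 sep_ed.
Qed.

Lemma prune_vertices_meet S H1 H2 : is_tree G H1 -> is_tree G H2 ->
    S \subset H1.1 -> S \subset H2.1 -> internally_disjoint S H1 H2 ->
  prune_vertices S H1 :&: prune_vertices S H2 = S.
Proof.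
move=> tree1 tree2 SH1 SH2 disj; apply/setP => x; rewrite inE.
apply/andP/idP => [[x1 x2]|xS]; last first.
  by split; apply: (subsetP (sub_prune_vertices _)) xS; [exact: SH1 | exact: SH2].
apply/contraT => xS.
have [a [b [aS bS sep_ab]]] := prune_vertex_separates x1 xS.
have [c [d [cS dS sep_cd]]] := prune_vertex_separates x2 xS.
have [u [w [uS wS sep1 sep2]]] :=
  separates_common_pair tree1 tree2 SH1 SH2 xS (And4 aS bS cS dS) sep_ab sep_cd.
by case: (internally_disjoint_separates disj uS wS sep1 sep2).
Qed.

Lemma compl_indep_prune S S' m (F : 'I_m -> subgraph T) : S \subset S' -> S != set0 ->
  compl_indep G S' F -> compl_indep G S (fun i => prune S (F i)).
Proof.
move=> SS' Sne [steinerF indepF].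
have treeF i : is_tree G (F i) by case: (steinerF i).
have SF i : S \subset (F i).1 by case: (steinerF i) => _ S'F _; apply: subset_trans S'F.
split=> [i|i j ij]; first exact: prune_steiner_tree (treeF i) (SF i) Sne.
have [edges_ij _ paths_ij] := indepF i j ij.
have disj : internally_disjoint S (F i) (F j) by apply: internally_disjoint_sub SS' paths_ij.
have [[subi _ _ _] [subj _ _ _]] := (treeF i, treeF j).
split => /=.
- apply/eqP; rewrite -subset0 -edges_ij.
  by apply: setISS; apply/subsetP => E; rewrite inE => /andP[].
- exact: prune_vertices_meet (treeF i) (treeF j) (SF i) (SF j) disj.
- move=> x1 x2 p q x1S x2S /(prune_is_path subi) path_p /(prune_is_path subj) path_q.
  exact: disj.
Qed.

Lemma kappaS_sub S S' : S \subset S' -> S != set0 -> kappaS G S' <= kappaS G S.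
Proof.
move=> SS' Sne; apply/bigmax_leqP => m /asboolP[F indepF]; apply: leq_bigmax_cond.
by apply/asboolP; exists (fun i => prune S (F i)); apply: compl_indep_prune indepF.
Qed.

End Independence.

Lemma exists_superset_card (T : finType) (S : {set T}) n : #|S| <= n -> n <= #|T| ->
  exists2 S' : {set T}, S \subset S' & #|S'| = n.
Proof.
move=> Sn nT.
have : 0 < #|[set A : {set T} | A \subset ~: S & #|A| == n - #|S|]|.
  by rewrite cards_draws bin_gt0 leq_subLR cardsC.
case/card_gt0P => A; rewrite inE => /andP[AC /eqP cardA].
exists (S :|: A); first exact: subsetUl.
move: AC; rewrite subsets_disjoint setCK disjoint_sym -setI_eq0 => /eqP SA.
by rewrite cardsU SA cards0 subn0 cardA subnKC.
Qed.

Theorem corollary2p3 (T : finType) (G : rel T)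
  (Gsym : symmetric G) (Girr : irreflexive G)
  (Gconn : forall x y : T, connect G x y)
  (k l : nat) (hk : 2 <= k) (hkl : k <= l) (hl : l <= #|T|) :
  kappa_star G l <= kappa_star G k.
Proof.
rewrite /kappa_star -minEnat -leEnat; apply/bigmin_geP; split=> [|S /eqP cardS].
  exact: bigmin_le_id.
have [S' SS' cardS'] : exists2 S' : {set T}, S \subset S' & #|S'| = l.
  by apply: exists_superset_card hl; rewrite cardS.
have S_gt0 : S != set0 by rewrite -card_gt0 cardS (leq_trans _ hk).
apply: (@le_trans _ _ (kappaS G S')); last exact: kappaS_sub.
by apply: bigmin_le_cond; rewrite cardS'.
Qed.
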